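(* Let $G$ be a finite group, $H$ a subgroup of $G$, $\phi: H \to \{\pm 1\}$ a homomorphism, and $c \in G$. Then the equality $\phi(c^{-1}hc) = \phi(h)$ holds for at least half of the elements $h \in H \cap cHc^{-1}$.
   Context: For $h \in H \cap cHc^{-1}$ one has $c^{-1}hc \in H$, so $\phi(c^{-1}hc)$ is defined. *)

From HB Require Import structures.
From mathcomp Require Import all_boot all_order all_algebra all_fingroup.
Set Implicit Arguments. Unset Strict Implicit. Unset Printing Implicit Defensive.
Import GRing.Theory Num.Theory.

(* A homomorphism phi : H -> {+1,-1}, where {+1,-1} is viewed as the
   multiplicative subgroup of the units of int.  phi is given as a function
   on the whole ambient group gT; only its values on H matter. *)
Definition sign_hom (gT : finGroupType) (H : {set gT}) (phi : gT -> int) : Prop :=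
  (forall h, h \in H -> (phi h = 1 \/ phi h = -1)%R) /\
  (forall x y, x \in H -> y \in H -> phi (x * y)%g = (phi x * phi y)%R).

From HB Require Import structures.
From mathcomp Require Import all_boot all_order all_algebra all_fingroup.
Set Implicit Arguments. Unset Strict Implicit. Unset Printing Implicit Defensive.
Import GRing.Theory.

(* The map h |-> phi (c^-1 h c) * phi h is again a sign homomorphism on the
   group H :&: H :^ c^-1, and its kernel is exactly the set of h for which the
   equality holds.  A sign homomorphism is either trivial or has a kernel of
   index 2: left multiplication by any element of sign -1 maps the elements of
   sign -1 injectively into the kernel. *)

Section SignHomomorphisms.

Variable gT : finGroupType.
Implicit Types (A B : {set gT}) (K : {group gT}) (phi psi : gT -> int).

Lemma sign_homS A B phi : B \subset A -> sign_hom A phi -> sign_hom B phi.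
Proof.
move=> /subsetP sBA [phi_sign phiM]; split=> [h /sBA | x y /sBA Ax /sBA Ay].
  exact: phi_sign.
exact: phiM.
Qed.

Lemma sign_hom_conj A phi c :
  sign_hom A phi -> sign_hom (A :^ c^-1)%g (fun h => phi (h ^ c)%g).
Proof.
move=> [phi_sign phiM]; split=> [h | x y]; rewrite ?mem_conjgV.
  exact: phi_sign.
by move=> Ax Ay; rewrite conjMg phiM.
Qed.

Lemma sign_homM A phi psi :
  sign_hom A phi -> sign_hom A psi -> sign_hom A (fun h => (phi h * psi h)%R).
Proof.
move=> [phi_sign phiM] [psi_sign psiM]; split=> [h Ah | x y Ax Ay].
  by case: (phi_sign h Ah) => ->; case: (psi_sign h Ah) => ->; [left|right|right|left].
by rewrite phiM // psiM // mulrACA.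
Qed.

Lemma sign_hom_ker_half K psi :
  sign_hom K psi -> (#|K| <= 2 * #|[set h in K | psi h == 1%R]|)%N.
Proof.
move=> [psi_sign psiM].
set ker := [set h in K | psi h == 1%R]; set neg := [set h in K | psi h != 1%R].
have negE h : h \in neg -> h \in K /\ psi h = (-1)%R.
  by rewrite inE => /andP[Kh]; case: (psi_sign h Kh) => ->.
have cardK : #|K| = (#|ker| + #|neg|)%N.
  rewrite -(cardsID [set h | psi h == 1%R] K).
  by congr addn; apply: eq_card => h; rewrite !inE andbC.
have le_neg_ker : (#|neg| <= #|ker|)%N.
  have [-> | [k /negE [Kk psik]]] := set_0Vmem neg; first by rewrite cards0.
  rewrite -(card_imset neg (mulgI k)); apply/subset_leq_card/subsetP.
  move=> _ /imsetP[h /negE [Kh psih] ->].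
  by rewrite inE groupM //= psiM // psik psih mulrNN mulr1.
by rewrite cardK mul2n -addnn leq_add2l.
Qed.

End SignHomomorphisms.

Lemma sign_mul_eq1 (a b : int) :
  (a = 1 \/ a = -1)%R -> (b = 1 \/ b = -1)%R -> (a * b == 1)%R = (a == b).
Proof. by case=> ->; case=> ->. Qed.

Theorem lemma1 (gT : finGroupType) (H : {group gT}) (phi : gT -> int) (c : gT) :
  sign_hom H phi ->
  (#|(H :&: H :^ c^-1)%g| <= 2 * #|[set h in (H :&: H :^ c^-1)%g | phi (h ^ c)%g == phi h]|)%N.
Proof.
move=> phi_hom.
set K := (H :&: H :^ c^-1)%G.
have psi_hom : sign_hom K (fun h => (phi (h ^ c)%g * phi h)%R).
  apply: sign_homM.
  - exact: sign_homS (subsetIr _ _) (sign_hom_conj c phi_hom).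
  - exact: sign_homS (subsetIl _ _) phi_hom.
have := sign_hom_ker_half psi_hom; congr (_ <= 2 * _)%N.
apply: eq_card => h; rewrite !inE mem_conjgV; apply: andb_id2l => /andP[Hh Hhc].
have [phi_sign _] := phi_hom.
by rewrite sign_mul_eq1 //; apply: phi_sign.
Qed.
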